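(* Let $A$ be a real $m \times N$ matrix and let $h$ be a positive integer. Suppose that for every index set $H \subseteq \{1,\dots,N\}$ with $|H| \le h$, the $m \times |H|$ submatrix $A_H$ formed by the columns of $A$ indexed by $H$ has at least one row containing exactly one nonzero entry. Then every vector $\mathbf{x}\in\mathbb{R}^N$ with at most $k$ nonzero entries, where $k < \frac{h+1}{2}$, is the unique sparsest vector $\tilde{\mathbf{x}}$ satisfying $A\tilde{\mathbf{x}} = A\mathbf{x}$.
   Context: ''Sparsest'' means having the fewest nonzero entries. *)

From mathcomp Require Import all_boot all_order all_algebra.
From mathcomp Require Import reals.
Set Implicit Arguments. Unset Strict Implicit. Unset Printing Implicit Defensive.
Import Order.TTheory GRing.Theory Num.Theory.
Local Open Scope ring_scope.

Definition nnz (R : ringType) (N : nat) (x : 'cV[R]_N) : nat :=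
  #|[set i : 'I_N | x i 0 != 0]|.

Definition has_singleton_row (R : ringType) (m N : nat) (A : 'M[R]_(m, N))
    (H : {set 'I_N}) : Prop :=
  exists j : 'I_m, #|[set i in H | A j i != 0]| = 1%N.

Definition unique_sparsest (R : ringType) (m N : nat) (A : 'M[R]_(m, N))
    (x : 'cV[R]_N) : Prop :=
  forall y : 'cV[R]_N, A *m y = A *m x -> (nnz y <= nnz x)%N -> y = x.

From mathcomp Require Import all_boot all_order all_algebra.
From mathcomp Require Import reals.
Set Implicit Arguments. Unset Strict Implicit. Unset Printing Implicit Defensive.
Local Open Scope ring_scope.
Import GRing.Theory.

(* If [A y = A x] with [y] no denser than [x], then [y - x] is a kernel vector
   with at most [2k <= h] nonzero entries.  A row of [A] meeting the support of
   a nonzero vector in exactly one column sees a single nonzero product in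
   [A *m z], so such a vector cannot lie in the kernel; hence [y = x]. *)

Lemma nnz_eq0 (R : nzRingType) (N : nat) (x : 'cV[R]_N) : (nnz x == 0)%N = (x == 0).
Proof.
rewrite /nnz cards_eq0; apply/eqP/eqP => [supp0 | ->].
  apply/matrixP => i j; rewrite (ord1 j) mxE; apply/eqP.
  by have := in_set0 i; rewrite -supp0 inE => /negbFE.
by apply/setP => i; rewrite !inE mxE eqxx.
Qed.

Lemma nnzB (R : nzRingType) (N : nat) (x y : 'cV[R]_N) :
  (nnz (x - y) <= nnz x + nnz y)%N.
Proof.
apply: leq_trans (leq_card_setU _ _); apply/subset_leq_card/subsetP => i.
rewrite !inE !mxE; apply: contraR; rewrite negb_or !negbK => /andP[/eqP-> /eqP->].
by rewrite subrr.
Qed.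

Lemma singleton_row_mulmx_neq0 (R : idomainType) (m N : nat) (A : 'M[R]_(m, N))
    (z : 'cV[R]_N) :
  has_singleton_row A [set i | z i 0 != 0] -> A *m z != 0.
Proof.
case=> j /eqP/cards1P[i0 rowj].
have : i0 \in [set i in [set i | z i 0 != 0] | A j i != 0] by rewrite rowj set11.
rewrite !inE => /andP[zi0 Aji0].
have Azj : (A *m z) j 0 = A j i0 * z i0 0.
  rewrite mxE (bigD1 i0) //= big1 ?addr0 // => i ni0.
  apply/eqP; rewrite mulf_eq0 orbC; apply/contraT; rewrite negb_or => nz.
  have : i \in [set i in [set i | z i 0 != 0] | A j i != 0] by rewrite !inE.
  by rewrite rowj inE (negbTE ni0).
apply: contraNneq (mulf_neq0 Aji0 zi0) => Az0.
by rewrite -Azj Az0 mxE.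
Qed.

Lemma sparse_kernel_eq0 (R : idomainType) (m N h : nat) (A : 'M[R]_(m, N))
    (z : 'cV[R]_N) :
  (forall H : {set 'I_N}, (0 < #|H|)%N -> (#|H| <= h)%N -> has_singleton_row A H) ->
  A *m z = 0 -> (nnz z <= h)%N -> z = 0.
Proof.
move=> singleton_rows Az0 nnz_le; apply/eqP; rewrite -nnz_eq0 -leqn0 leqNgt.
apply/negP => nnz_gt0.
have := singleton_row_mulmx_neq0 (singleton_rows _ nnz_gt0 nnz_le).
by rewrite Az0 eqxx.
Qed.

Theorem theorem3 (R : realType) (m N h k : nat) (A : 'M[R]_(m, N)) :
  (0 < h)%N ->
  (forall H : {set 'I_N}, (0 < #|H|)%N -> (#|H| <= h)%N -> has_singleton_row A H) ->
  (k.*2 < h.+1)%N ->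
  forall x : 'cV[R]_N, (nnz x <= k)%N -> unique_sparsest A x.
Proof.
move=> _ singleton_rows hk x nnz_x y Ay nnz_y.
apply/eqP; rewrite -subr_eq0; apply/eqP.
apply: (sparse_kernel_eq0 singleton_rows); first by rewrite mulmxBr Ay subrr.
apply: leq_trans (nnzB y x) _; rewrite -ltnS; apply: leq_ltn_trans hk.
by rewrite -addnn leq_add // (leq_trans nnz_y).
Qed.
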